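(* Let $k<n$ be coprime positive integers, $b=k/n$, and let $F\in\mathfrak{F}$ (with this $b$ and $n$). Then $F$ has an attracting periodic orbit of period $n$ all of whose points lie in the first lap $(-\infty,y_-)$ or the third lap $(y_+,\infty)$ of $F$. Moreover, both critical points $y_-$ and $y_+$ of $F$ lie in the immediate basin of attraction of this periodic orbit.
   Context: Fix coprime positive integers $k<n$ and set $b=k/n\in(0,1)$. Let $g\colon\mathbb{R}\to(0,1)$ be a $C^3$ map and $F\colon\mathbb{R}\to\mathbb{R}$, $F(x)=x+b-g(x)$. The class $\mathfrak{F}$ consists of all such $F$ for which the Schwarzian derivative $SF=\frac{F'''}{F'}-\frac32\left(\frac{F''}{F'}\right)^2$ is negative (wherever defined) and the following hold: (A) there exist $y_-,y_+$ with $b-1<y_-<0<y_+<b$ such that $0<g'(x)<1$ on $(-\infty,y_-)\cup(y_+,\infty)$, $g'(y_-)=g'(y_+)=1$, and $g'(x)>1$ on $(y_-,y_+)$; (B) $g(b-1)<b<g(b)$; (C) there exists $\varepsilon>0$ such that (C1) $g(x)<\varepsilon$ for all $x<-\frac1{2n}$; (C2) $g(x)>1-\varepsilon$ for all $x>\frac1{2n}$; (C3) $(n-1)\varepsilon<1-g(y_+)$ and $(n-1)\varepsilon<\frac1{2n}-\big(1-g(y_+)+y_+\big)$; (C4) $(n-1)\varepsilon<g(y_-)$ and $(n-1)\varepsilon<\frac1{2n}-\big(g(y_-)-y_-\big)$. Thus $F$ is increasing on $(-\infty,y_-]$ (the first lap) and on $[y_+,\infty)$ (the third lap), decreasing on $[y_-,y_+]$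 (the second lap), and $y_\pm$ are its critical points. The immediate basin of attraction of an attracting periodic orbit is the union of the connected components of its basin of attraction that contain points of the orbit. *)

From Stdlib Require Import Reals.
From Coquelicot Require Import Coquelicot.
Open Scope R_scope.

Definition iterF (F : R -> R) (m : nat) (x : R) : R := Nat.iter m F x.

Definition C3 (g : R -> R) : Prop :=
  (forall x, ex_derive_n g 1 x /\ ex_derive_n g 2 x /\ ex_derive_n g 3 x) /\
  (forall x, continuous (Derive_n g 3) x).

Definition schwarzian (F : R -> R) (x : R) : R :=
  Derive_n F 3 x / Derive_n F 1 x
  - 3 / 2 * (Derive_n F 2 x / Derive_n F 1 x) ^ 2.

Definition Fmap (b : R) (g : R -> R) (x : R) : R := x + b - g x.

Definition in_class_F (n : nat) (b : R) (g : R -> R) (ym yp eps : R) : Prop :=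
  let F := Fmap b g in
  C3 g /\
  (forall x, 0 < g x < 1) /\
  (forall x, Derive F x <> 0 -> schwarzian F x < 0) /\
  (b - 1 < ym /\ ym < 0 /\ 0 < yp /\ yp < b) /\
  (forall x, (x < ym \/ yp < x) -> 0 < Derive g x < 1) /\
  Derive g ym = 1 /\ Derive g yp = 1 /\
  (forall x, ym < x < yp -> Derive g x > 1) /\
  (g (b - 1) < b /\ b < g b) /\
  0 < eps /\
  (forall x, x < - (1 / (2 * INR n)) -> g x < eps) /\
  (forall x, x > 1 / (2 * INR n) -> g x > 1 - eps) /\
  ((INR n - 1) * eps < 1 - g yp /\
   (INR n - 1) * eps < 1 / (2 * INR n) - (1 - g yp + yp)) /\
  ((INR n - 1) * eps < g ym /\
   (INR n - 1) * eps < 1 / (2 * INR n) - (g ym - ym)).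

Definition periodic_of_period (F : R -> R) (n : nat) (p : R) : Prop :=
  (0 < n)%nat /\ iterF F n p = p /\
  (forall j : nat, (0 < j < n)%nat -> iterF F j p <> p).

Definition attracting (F : R -> R) (n : nat) (p : R) : Prop :=
  ex_derive (iterF F n) p /\ Rabs (Derive (iterF F n) p) < 1.

Definition basin (F : R -> R) (n : nat) (p : R) (x : R) : Prop :=
  exists j : nat, (j < n)%nat /\
    is_lim_seq (fun m : nat => iterF F (m * n) x) (iterF F j p).

(* immediate basin: union of the connected components of the basin that
   contain orbit points.  In R, x lies in the connected component of the
   basin containing q iff the closed segment between x and q lies in the
   basin. *)
Definition immediate_basin (F : R -> R) (n : nat) (p : R) (x : R) : Prop :=
  exists j : nat, (j < n)%nat /\
    forall z, Rmin x (iterF F j p) <= z <= Rmax x (iterF F j p) ->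
      basin F n p z.

From Stdlib Require Import Reals Arith Lra Lia ZArith.
From Coquelicot Require Import Coquelicot.
Open Scope R_scope.

(* Cut the line into cells of width 1/n centred at the points r/n.  By (C1)-(C2),
   outside the cell of 0 the map F is within eps of x + k/n on the left and of
   x + k/n - 1 on the right, so it moves cells like a lift of the rotation by k/n.
   By (C3)-(C4) the first n iterates of the critical points keep up with this
   rotation: F^j(y+) sits just right of the left end of a cell, F^l(y-) just left
   of the right end.  Whenever their cells are adjacent, r and r+1, the segment
   [F^j(y+), F^l(y-)] avoids (y-, y+), so F is increasing with slope in (0,1) on
   it; these n segments are permuted cyclically by F.  On the one next to 0 the
   map F^n is an increasing contraction, hence has a unique attracting fixed point
   attracting the whole segment; coprimality of k and n gives period exactly n.
   Finally [y+, p] and [F^i p, y-] are mapped by F^n into such segments. *)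

(* Cell dynamics of the rotation by K/N: a point of cell r moves to cell r + K
   if r < 0 and to cell r + K - N if r > 0.  The cell 0 is sent as if it were a
   right cell by [rstep] (this is the orbit of y+ > 0) and as a left cell by
   [lstep] (the orbit of y- < 0). *)
Definition rstep (K N r : Z) : Z := if (r <? 0)%Z then (r + K)%Z else (r + K - N)%Z.
Definition lstep (K N s : Z) : Z := if (s <=? 0)%Z then (s + K)%Z else (s + K - N)%Z.
Definition rcell (K N : Z) (j : nat) : Z := Nat.iter j (rstep K N) 0%Z.
Definition lcell (K N : Z) (j : nat) : Z := Nat.iter j (lstep K N) 0%Z.

Lemma lstep_rstep_succ (K N r : Z) : lstep K N (r + 1)%Z = (rstep K N r + 1)%Z.
Proof. unfold lstep, rstep. destruct (Z.ltb_spec r 0), (Z.leb_spec (r + 1)%Z 0); lia. Qed.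

Lemma lstep_rstep_neq0 (K N s : Z) : s <> 0%Z -> lstep K N s = rstep K N s.
Proof. intros. unfold lstep, rstep. destruct (Z.leb_spec s 0), (Z.ltb_spec s 0); lia. Qed.

Section RotationCells.
Local Open Scope Z_scope.
Variables k n : nat.
Hypotheses (Hk : (0 < k)%nat) (Hkn : (k < n)%nat) (Hcop : Nat.gcd k n = 1%nat).
Local Notation K := (Z.of_nat k).
Local Notation N := (Z.of_nat n).

Lemma rcell_spec j : K - N <= rcell K N j < K /\ exists t, rcell K N j = Z.of_nat j * K - N * t.
Proof.
  induction j as [|j [IH [t Ht]]].
  - change (rcell K N 0) with 0. split; [lia | exists 0; lia].
  - change (rcell K N (S j)) with (rstep K N (rcell K N j)).
    rewrite Nat2Z.inj_succ; unfold rstep.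
    destruct (Z.ltb_spec (rcell K N j) 0).
    + split; [lia | exists t; lia].
    + split; [lia | exists (t + 1); lia].
Qed.

Lemma lcell_spec j : K - N < lcell K N j <= K /\ exists t, lcell K N j = Z.of_nat j * K - N * t.
Proof.
  induction j as [|j [IH [t Ht]]].
  - change (lcell K N 0) with 0. split; [lia | exists 0; lia].
  - change (lcell K N (S j)) with (lstep K N (lcell K N j)).
    rewrite Nat2Z.inj_succ; unfold lstep.
    destruct (Z.leb_spec (lcell K N j) 0).
    + split; [lia | exists t; lia].
    + split; [lia | exists (t + 1); lia].
Qed.

Lemma bezout_k_n : exists a c, a * K + c * N = 1.
Proof.
  destruct (Nat.gcd_bezout k n) as [[a [c H]] | [a [c H]]]; rewrite Hcop in H.
  - exists (Z.of_nat a), (- Z.of_nat c). lia.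
  - exists (- Z.of_nat c), (Z.of_nat a). lia.
Qed.

Lemma rot_residue_neq0 (j : nat) t : (0 < j < n)%nat -> Z.of_nat j * K - N * t <> 0.
Proof.
  intros Hj E. destruct bezout_k_n as [a [c Hac]].
  assert (Hjt : Z.of_nat j * K = N * t) by lia.
  assert (Hdiv : Z.of_nat j = N * (a * t + c * Z.of_nat j)).
  { rewrite <- (Z.mul_1_r (Z.of_nat j)) at 1. rewrite <- Hac.
    replace (Z.of_nat j * (a * K + c * N)) with (a * (Z.of_nat j * K) + c * N * Z.of_nat j) by ring.
    rewrite Hjt. ring. }
  destruct (Z.le_gt_cases (a * t + c * Z.of_nat j) 0); nia.
Qed.

Lemma rot_residue_n_eq0 t : K - N <= N * K - N * t <= K -> N * K - N * t = 0.
Proof.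
  rewrite <- Z.mul_sub_distr_l. intros H.
  destruct (Z.lt_trichotomy (K - t) 0) as [h | [h | h]]; nia.
Qed.

Lemma rcell_neq0 j : (0 < j < n)%nat -> rcell K N j <> 0.
Proof. intros Hj. destruct (rcell_spec j) as [_ [t ->]]. now apply rot_residue_neq0. Qed.

Lemma lcell_neq0 j : (0 < j < n)%nat -> lcell K N j <> 0.
Proof. intros Hj. destruct (lcell_spec j) as [_ [t ->]]. now apply rot_residue_neq0. Qed.

Lemma rcell_n : rcell K N n = 0.
Proof. destruct (rcell_spec n) as [B [t E]]. rewrite E in *. apply rot_residue_n_eq0. lia. Qed.

Lemma lcell_n : lcell K N n = 0.
Proof. destruct (lcell_spec n) as [B [t E]]. rewrite E in *. apply rot_residue_n_eq0. lia. Qed.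

Lemma lcell_one : exists l, (0 < l <= n)%nat /\ lcell K N l = 1.
Proof.
  destruct bezout_k_n as [a [c Hac]].
  assert (Hm : 0 <= a mod N < N) by (apply Z.mod_pos_bound; lia).
  assert (Hd : a = N * (a / N) + a mod N) by (apply Z.div_mod; lia).
  exists (Z.to_nat (a mod N)).
  destruct (lcell_spec (Z.to_nat (a mod N))) as [B [t Ht]].
  rewrite Z2Nat.id in Ht by lia.
  assert (a mod N <> 0).
  { intros h. assert (1 = N * (a / N * K + c)) by nia.
    destruct (Z.le_gt_cases (a / N * K + c) 0); nia. }
  assert (E : lcell K N (Z.to_nat (a mod N)) = 1 - N * (c + a / N * K + t)) by nia.
  split; [lia |].
  destruct (Z.lt_trichotomy (c + a / N * K + t) 0) as [h | [h | h]]; nia.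
Qed.

End RotationCells.

Definition cyc_succ (n j : nat) : nat := if (j <? n)%nat then S j else 1%nat.

Lemma cyc_succ_n n : cyc_succ n n = 1%nat.
Proof. unfold cyc_succ. now rewrite Nat.ltb_irrefl. Qed.

Lemma cyc_succ_range n j : (0 < j <= n)%nat -> (0 < cyc_succ n j <= n)%nat.
Proof. unfold cyc_succ; intros; destruct (Nat.ltb_spec j n); lia. Qed.

Lemma iter_cyc_succ_add n i j : (0 < j)%nat -> (j + i <= n)%nat ->
  Nat.iter i (cyc_succ n) j = (j + i)%nat.
Proof.
  induction i as [|i IH]; intros; simpl; [lia|].
  rewrite IH by lia. unfold cyc_succ. destruct (Nat.ltb_spec (j + i) n); lia.
Qed.

Lemma iter_cyc_succ_from_n n j : (0 < j <= n)%nat -> Nat.iter j (cyc_succ n) n = j.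
Proof.
  intros Hj. destruct j as [|j]; [lia|].
  rewrite Nat.iter_succ_r, cyc_succ_n, iter_cyc_succ_add; lia.
Qed.

Lemma iter_cyc_succ_period n j : (0 < j <= n)%nat -> Nat.iter n (cyc_succ n) j = j.
Proof.
  intros Hj. transitivity (Nat.iter ((j - 1) + S (n - j)) (cyc_succ n) j); [f_equal; lia|].
  rewrite Nat.iter_add, Nat.iter_succ, (iter_cyc_succ_add n (n - j) j) by lia.
  replace (j + (n - j))%nat with n by lia.
  rewrite cyc_succ_n, iter_cyc_succ_add; lia.
Qed.

Lemma Un_cv_between (u : nat -> R) lo hi l :
  Un_cv u l -> (forall m, lo <= u m <= hi) -> lo <= l <= hi.
Proof.
  intros Hu Hb. assert (Hc : forall c, Un_cv (fun _ => c) c)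
    by (intros c; apply is_lim_seq_Reals, is_lim_seq_const).
  split.
  - apply (Rle_cv_lim (Un := fun _ => lo) (Vn := u)); auto. apply Hb.
  - apply (Rle_cv_lim (Un := u) (Vn := fun _ => hi)); auto. apply Hb.
Qed.

Lemma iter_limit_fixed (G : R -> R) z l :
  continuity_pt G l -> Un_cv (fun m => Nat.iter m G z) l -> G l = l.
Proof.
  intros Gcont Hu. apply UL_sequence with (fun m => G (Nat.iter m G z)).
  - exact (continuity_seq G _ l Gcont Hu).
  - apply (CV_shift' _ 1 l) in Hu.
    intros e He. destruct (Hu e He) as [M HM]. exists M. intros m Hm.
    specialize (HM m Hm). now rewrite Nat.add_1_r in HM.
Qed.

Lemma iter_cvg_fixpoint (G : R -> R) (a c q : R) :
  (forall x, continuity_pt G x) -> a <= q <= c -> G q = q ->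
  (forall x y, a <= x <= y -> y <= c -> G x <= G y) ->
  (forall x y, a <= x -> x < y -> y <= c -> G y - y < G x - x) ->
  forall z, a <= z <= c -> Un_cv (fun m => Nat.iter m G z) q.
Proof.
  intros Gcont Hq Gq Gmono Gdisp z Hz.
  set (u := fun m => Nat.iter m G z).
  assert (Hbelow : forall x, a <= x <= q -> x <= G x <= q).
  { intros x Hx. destruct (Req_dec x q) as [-> | Hne]; [lra|].
    pose proof (Gdisp x q). pose proof (Gmono x q). lra. }
  assert (Habove : forall x, q <= x <= c -> q <= G x <= x).
  { intros x Hx. destruct (Req_dec x q) as [-> | Hne]; [lra|].
    pose proof (Gdisp q x). pose proof (Gmono q x). lra. }
  assert (Hlim : forall l, a <= l <= c -> Un_cv u l -> l = q).
  { intros l Hl Hu. pose proof (iter_limit_fixed G z l (Gcont l) Hu).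
    destruct (Rtotal_order l q) as [h | [h | h]]; auto.
    - pose proof (Gdisp l q). lra.
    - pose proof (Gdisp q l). lra. }
  destruct (Rle_or_lt z q) as [hz | hz].
  - assert (Hb : forall m, z <= u m <= q).
    { induction m; simpl; [lra|]. pose proof (Hbelow (u m)). simpl in *. lra. }
    assert (Hg : Un_growing u) by (intros m; apply (Hbelow (u m)); specialize (Hb m); lra).
    destruct (growing_cv u Hg) as [l Hl]; [exists q; intros x [m ->]; apply Hb|].
    replace q with l; [exact Hl|].
    apply Hlim; [pose proof (Un_cv_between u z q l Hl Hb); lra | exact Hl].
  - assert (Hb : forall m, q <= u m <= z).
    { induction m; simpl; [lra|]. pose proof (Habove (u m)). simpl in *. lra. }
    assert (Hd : Un_decreasing u) by (intros m; apply (Habove (u m)); specialize (Hb m); lra).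
    destruct (decreasing_cv u Hd) as [l Hl]; [exists (- q); intros x [m ->]; unfold opp_seq; specialize (Hb m); lra|].
    replace q with l; [exact Hl|].
    apply Hlim; [pose proof (Un_cv_between u q z l Hl Hb); lra | exact Hl].
Qed.

Section Dynamics.
Variables (k n : nat) (g : R -> R) (ym yp eps : R).
Hypotheses (Hk : (0 < k)%nat) (Hkn : (k < n)%nat) (Hcop : Nat.gcd k n = 1%nat).
Hypothesis HC : in_class_F n (INR k / INR n) g ym yp eps.

Local Notation F := (Fmap (INR k / INR n) g).
Local Notation u := (/ INR n).
Local Notation K := (Z.of_nat k).
Local Notation N := (Z.of_nat n).
Local Notation P j := (iterF F j yp).
Local Notation Q l := (iterF F l ym).

Lemma g_ex_derive x : ex_derive g x.
Proof. destruct HC as [[H _] _]. exact (proj1 (H x)). Qed.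

Lemma g_between x : 0 < g x < 1.
Proof. destruct HC as (_ & H & _). apply H. Qed.

Lemma crit_sign : ym < 0 < yp.
Proof. destruct HC as (_ & _ & _ & H & _). lra. Qed.

Lemma Dg_outer x : x < ym \/ yp < x -> 0 < Derive g x < 1.
Proof. destruct HC as (_ & _ & _ & _ & H & _). apply H. Qed.

Lemma eps_pos : 0 < eps.
Proof. destruct HC as (_ & _ & _ & _ & _ & _ & _ & _ & _ & H & _). exact H. Qed.

Lemma half_cell : 1 / (2 * INR n) = u / 2.
Proof. field. apply not_0_INR. lia. Qed.

Lemma g_left x : x < - (u / 2) -> g x < eps.
Proof. rewrite <- half_cell. destruct HC as (_ & _ & _ & _ & _ & _ & _ & _ & _ & _ & H & _). apply H. Qed.

Lemma g_right x : u / 2 < x -> 1 - eps < g x.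
Proof. rewrite <- half_cell. destruct HC as (_ & _ & _ & _ & _ & _ & _ & _ & _ & _ & _ & H & _). apply H. Qed.

Lemma yp_margin : (INR n - 1) * eps < 1 - g yp /\ (INR n - 1) * eps < u / 2 - (1 - g yp + yp).
Proof. rewrite <- half_cell. destruct HC as (_ & _ & _ & _ & _ & _ & _ & _ & _ & _ & _ & _ & H & _). exact H. Qed.

Lemma ym_margin : (INR n - 1) * eps < g ym /\ (INR n - 1) * eps < u / 2 - (g ym - ym).
Proof. rewrite <- half_cell. destruct HC as (_ & _ & _ & _ & _ & _ & _ & _ & _ & _ & _ & _ & _ & H). exact H. Qed.

Lemma cell_width_pos : 0 < u.
Proof. apply Rinv_0_lt_compat, lt_0_INR. lia. Qed.

Lemma is_derive_F x : is_derive F x (1 - Derive g x).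
Proof.
  unfold Fmap. auto_derive; [apply g_ex_derive|].
  change (Derive (fun t => g t) x) with (Derive g x). ring.
Qed.

Lemma F_le_outer x y : x <= y -> y <= ym \/ yp <= x -> F x <= F y.
Proof.
  intros Hxy Hout. destruct (Req_dec x y) as [-> | Hne]; [lra|].
  destruct (MVT_cor2 F (fun t => 1 - Derive g t) x y ltac:(lra)) as [c [Hc Hcxy]].
  { intros c _. apply is_derive_Reals, is_derive_F. }
  assert (0 < Derive g c < 1) by (apply Dg_outer; lra). cbv beta in Hc. nra.
Qed.

Lemma F_cell_step (r : Z) o : r <> 0%Z -> - (u / 2) < o < u / 2 ->
  exists o', F (IZR r * u + o) = IZR (rstep K N r) * u + o' /\ o - eps < o' < o + eps.
Proof.
  intros Hr Ho. pose proof cell_width_pos. unfold rstep.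
  destruct (Z.ltb_spec r 0) as [h | h].
  - assert (IZR r <= -1) by (apply IZR_le; lia).
    pose proof (g_left (IZR r * u + o) ltac:(nra)). pose proof (g_between (IZR r * u + o)).
    exists (o - g (IZR r * u + o)). split; [|lra].
    unfold Fmap. rewrite plus_IZR, <- INR_IZR_INZ. unfold Rdiv. ring.
  - assert (1 <= IZR r) by (apply IZR_le; lia).
    pose proof (g_right (IZR r * u + o) ltac:(nra)). pose proof (g_between (IZR r * u + o)).
    exists (o + 1 - g (IZR r * u + o)). split; [|lra].
    unfold Fmap. rewrite minus_IZR, plus_IZR, <- !INR_IZR_INZ. field. apply not_0_INR. lia.
Qed.

Lemma orbit_tracks_cells (c : nat -> Z) x o1 :
  (forall j, (0 < j < n)%nat -> c j <> 0%Z /\ c (S j) = rstep K N (c j)) ->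
  F x = IZR (c 1%nat) * u + o1 ->
  - (u / 2) < o1 - (INR n - 1) * eps -> o1 + (INR n - 1) * eps < u / 2 ->
  forall j, (0 < j <= n)%nat -> exists o, iterF F j x = IZR (c j) * u + o /\
    o1 - (INR j - 1) * eps <= o <= o1 + (INR j - 1) * eps.
Proof.
  intros Hc H1 Hlo Hhi j Hj. induction j as [|j IH]; [lia|].
  destruct (Nat.eq_dec j 0) as [-> | Hj0].
  - exists o1. split; [exact H1 | simpl; lra].
  - destruct IH as [o [Eo Ho]]; [lia|]. destruct (Hc j ltac:(lia)) as [Hcj Hcs].
    pose proof eps_pos. assert (INR j <= INR n) by (apply le_INR; lia).
    destruct (F_cell_step (c j) o Hcj) as [o' [E' Ho']]; [split; nra|].
    exists o'. split.
    + change (iterF F (S j) x) with (F (iterF F j x)). now rewrite Eo, E', Hcs.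
    + rewrite S_INR. lra.
Qed.

Lemma yp_orbit_cell j : (0 < j <= n)%nat ->
  IZR (rcell K N j) * u + yp < P j < IZR (rcell K N j) * u + u / 2.
Proof.
  intros Hj. pose proof yp_margin. pose proof crit_sign. pose proof eps_pos. pose proof cell_width_pos.
  assert (INR j <= INR n) by (apply le_INR; lia).
  assert (1 <= INR j) by (apply (le_INR 1); lia).
  assert (Hstep : forall i, (0 < i < n)%nat ->
    rcell K N i <> 0%Z /\ rcell K N (S i) = rstep K N (rcell K N i)).
  { intros i Hi. split; [now apply (rcell_neq0 k n) | reflexivity]. }
  assert (Hstart : F yp = IZR (rcell K N 1) * u + (1 - g yp + yp)).
  { replace (rcell K N 1) with (K - N)%Z by (unfold rcell, rstep; simpl; lia).
    unfold Fmap. rewrite minus_IZR, <- !INR_IZR_INZ. field. apply not_0_INR. lia. }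
  destruct (orbit_tracks_cells _ _ _ Hstep Hstart ltac:(lra) ltac:(lra) j Hj) as [o [-> Ho]].
  nra.
Qed.

Lemma ym_orbit_cell l : (0 < l <= n)%nat ->
  IZR (lcell K N l) * u - u / 2 < Q l < IZR (lcell K N l) * u + ym.
Proof.
  intros Hl. pose proof ym_margin. pose proof crit_sign. pose proof eps_pos. pose proof cell_width_pos.
  assert (INR l <= INR n) by (apply le_INR; lia).
  assert (1 <= INR l) by (apply (le_INR 1); lia).
  assert (Hstep : forall i, (0 < i < n)%nat ->
    lcell K N i <> 0%Z /\ lcell K N (S i) = rstep K N (lcell K N i)).
  { intros i Hi. split; [now apply (lcell_neq0 k n) |].
    apply lstep_rstep_neq0. now apply (lcell_neq0 k n). }
  assert (Hstart : F ym = IZR (lcell K N 1) * u + (ym - g ym)).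
  { replace (lcell K N 1) with K by (unfold lcell, lstep; simpl; lia).
    unfold Fmap. rewrite <- INR_IZR_INZ. field. apply not_0_INR. lia. }
  destruct (orbit_tracks_cells _ _ _ Hstep Hstart ltac:(lra) ltac:(lra) l Hl) as [o [-> Ho]].
  nra.
Qed.

Lemma yp_orbit_return : yp < P n.
Proof. pose proof (yp_orbit_cell n ltac:(lia)) as Hn. rewrite (rcell_n k n) in Hn by auto. simpl in Hn. lra. Qed.

Lemma ym_orbit_return : Q n < ym.
Proof. pose proof (ym_orbit_cell n ltac:(lia)) as Hn. rewrite (lcell_n k n) in Hn by auto. simpl in Hn. lra. Qed.

Definition paired (j l : nat) : Prop :=
  (0 < j <= n)%nat /\ (0 < l <= n)%nat /\ lcell K N l = (rcell K N j + 1)%Z.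

Lemma pair_in_cell j l x : paired j l -> P j <= x <= Q l ->
  IZR (rcell K N j) * u < x < IZR (rcell K N j) * u + u.
Proof.
  intros (Hj & Hl & E) Hx. pose proof (yp_orbit_cell j Hj). pose proof (ym_orbit_cell l Hl).
  pose proof crit_sign. rewrite E, plus_IZR in *. lra.
Qed.

Lemma P_lt_Q j l : paired j l -> P j < Q l.
Proof.
  intros (Hj & Hl & E). pose proof (yp_orbit_cell j Hj). pose proof (ym_orbit_cell l Hl).
  rewrite E, plus_IZR in *. lra.
Qed.

Lemma pair_side j l : paired j l -> yp < P j \/ Q l < ym.
Proof.
  intros (Hj & Hl & E). pose proof (yp_orbit_cell j Hj). pose proof (ym_orbit_cell l Hl).
  pose proof cell_width_pos. pose proof crit_sign.
  destruct (Z.lt_trichotomy (rcell K N j) 0) as [h | [h | h]].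
  - right. destruct (Z.eq_dec (rcell K N j) (-1)) as [h1 | h1].
    + assert (l = n).
      { destruct (Nat.eq_dec l n); auto. exfalso. apply (lcell_neq0 k n Hk Hkn Hcop l); lia. }
      subst l. apply ym_orbit_return.
    + assert (IZR (lcell K N l) <= -1) by (apply IZR_le; lia). nra.
  - left. assert (j = n).
    { destruct (Nat.eq_dec j n); auto. exfalso. apply (rcell_neq0 k n Hk Hkn Hcop j); lia. }
    subst j. apply yp_orbit_return.
  - left. assert (1 <= IZR (rcell K N j)) by (apply IZR_le; lia). nra.
Qed.

Lemma pair_outer j l x : paired j l -> P j <= x <= Q l -> x < ym \/ yp < x.
Proof. intros Hjl Hx. destruct (pair_side j l Hjl); lra. Qed.

Lemma rcell_cyc_succ j : (0 < j <= n)%nat -> rcell K N (cyc_succ n j) = rstep K N (rcell K N j).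
Proof.
  intros Hj. unfold cyc_succ. destruct (Nat.ltb_spec j n); [reflexivity|].
  replace j with n by lia. now rewrite (rcell_n k n).
Qed.

Lemma lcell_cyc_succ l : (0 < l <= n)%nat -> lcell K N (cyc_succ n l) = lstep K N (lcell K N l).
Proof.
  intros Hl. unfold cyc_succ. destruct (Nat.ltb_spec l n); [reflexivity|].
  replace l with n by lia. now rewrite (lcell_n k n).
Qed.

Lemma paired_next j l : paired j l -> paired (cyc_succ n j) (cyc_succ n l).
Proof.
  intros (Hj & Hl & E). split; [|split]; try now apply cyc_succ_range.
  rewrite rcell_cyc_succ, lcell_cyc_succ, E by auto. apply lstep_rstep_succ.
Qed.

Lemma P_cyc_succ_le j : (0 < j <= n)%nat -> P (cyc_succ n j) <= F (P j).
Proof.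
  intros Hj. unfold cyc_succ. destruct (Nat.ltb_spec j n); [apply Rle_refl|].
  replace j with n by lia. pose proof yp_orbit_return. apply F_le_outer; lra.
Qed.

Lemma Q_cyc_succ_ge l : (0 < l <= n)%nat -> F (Q l) <= Q (cyc_succ n l).
Proof.
  intros Hl. unfold cyc_succ. destruct (Nat.ltb_spec l n); [apply Rle_refl|].
  replace l with n by lia. pose proof ym_orbit_return. apply F_le_outer; lra.
Qed.

Lemma F_le_pair j l x y : paired j l -> P j <= x -> x <= y -> y <= Q l -> F x <= F y.
Proof. intros Hjl H1 H2 H3. apply F_le_outer; [lra|]. destruct (pair_side j l Hjl); lra. Qed.

Lemma F_maps_pair j l x : paired j l -> P j <= x <= Q l ->
  P (cyc_succ n j) <= F x <= Q (cyc_succ n l).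
Proof.
  intros Hjl Hx.
  assert (F (P j) <= F x) by (apply (F_le_pair j l); auto; lra).
  assert (F x <= F (Q l)) by (apply (F_le_pair j l); auto; lra).
  destruct Hjl as (Hj & Hl & _).
  pose proof (P_cyc_succ_le j Hj). pose proof (Q_cyc_succ_ge l Hl). lra.
Qed.

Lemma iter_maps_pair i : forall j l x, paired j l -> P j <= x <= Q l ->
  paired (Nat.iter i (cyc_succ n) j) (Nat.iter i (cyc_succ n) l) /\
  P (Nat.iter i (cyc_succ n) j) <= iterF F i x <= Q (Nat.iter i (cyc_succ n) l).
Proof.
  induction i as [|i IH]; intros j l x Hjl Hx; [easy|].
  unfold iterF. rewrite !Nat.iter_succ_r.
  apply IH; [apply paired_next | apply F_maps_pair]; auto.
Qed.

Lemma iterF_le_pair i : forall j l x y, paired j l -> P j <= x -> x <= y -> y <= Q l ->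
  iterF F i x <= iterF F i y.
Proof.
  induction i as [|i IH]; intros j l x y Hjl H1 H2 H3; [easy|].
  unfold iterF. rewrite !Nat.iter_succ_r.
  apply (IH (cyc_succ n j) (cyc_succ n l)).
  - now apply paired_next.
  - apply (F_maps_pair j l x Hjl). lra.
  - now apply (F_le_pair j l).
  - apply (F_maps_pair j l y Hjl). lra.
Qed.

Lemma ex_derive_iterF m x : ex_derive (iterF F m) x.
Proof.
  induction m as [|m IH] in x |- *; [apply ex_derive_id|].
  eexists. apply (is_derive_comp F (iterF F m)); [apply is_derive_F | apply Derive_correct, IH].
Qed.

Lemma Derive_iterF_S m x :
  Derive (iterF F (S m)) x = Derive (iterF F m) x * (1 - Derive g (iterF F m x)).
Proof.
  apply is_derive_unique, (is_derive_comp F (iterF F m));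
    [apply is_derive_F | apply Derive_correct, ex_derive_iterF].
Qed.

Lemma Derive_iterF_outer m x :
  (forall i, (i <= m)%nat -> iterF F i x < ym \/ yp < iterF F i x) ->
  0 < Derive (iterF F (S m)) x < 1.
Proof.
  induction m as [|m IH]; intros Hout; rewrite Derive_iterF_S.
  - rewrite (Derive_id x : Derive (iterF F 0) x = 1). pose proof (Dg_outer x (Hout 0%nat (le_n 0))). simpl. lra.
  - assert (0 < Derive (iterF F (S m)) x < 1) by (apply IH; intros; apply Hout; lia).
    pose proof (Dg_outer _ (Hout (S m) (le_n _))). nra.
Qed.

Lemma continuity_iterF m x : continuity_pt (iterF F m) x.
Proof. apply continuity_pt_filterlim, (ex_derive_continuous (iterF F m)), ex_derive_iterF. Qed.

Lemma Fn_slope_pair j l x : paired j l -> P j <= x <= Q l -> 0 < Derive (iterF F n) x < 1.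
Proof.
  intros Hjl Hx. pose proof (Derive_iterF_outer (n - 1) x) as D.
  replace (S (n - 1)) with n in D by lia. apply D. intros i _. destruct (iter_maps_pair i j l x Hjl Hx) as [Hjl' Hx']. eapply pair_outer; eauto.
Qed.

Lemma Fn_displacement_decr j l x y : paired j l -> P j <= x -> x < y -> y <= Q l ->
  iterF F n y - y < iterF F n x - x.
Proof.
  intros Hjl H1 H2 H3.
  destruct (MVT_cor2 (fun t => iterF F n t - t) (fun t => Derive (iterF F n) t - 1) x y H2)
    as [c [Hc Hcxy]].
  { intros c _. apply is_derive_Reals. auto_derive; [apply ex_derive_iterF|].
    change (Derive (fun t => iterF F n t) c) with (Derive (iterF F n) c). ring. }
  assert (0 < Derive (iterF F n) c < 1) by (apply (Fn_slope_pair j l); auto; lra).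
  cbv beta in Hc. nra.
Qed.

Lemma Fn_maps_pair j l x : paired j l -> P j <= x <= Q l -> P j <= iterF F n x <= Q l.
Proof.
  intros Hjl Hx. destruct (iter_maps_pair n j l x Hjl Hx) as [_ H].
  destruct Hjl as (Hj & Hl & _). now rewrite !iter_cyc_succ_period in H.
Qed.

Lemma Fn_back_to_pair j l z : paired j l ->
  P (cyc_succ n j) <= F z <= Q (cyc_succ n l) -> P j <= iterF F n z <= Q l.
Proof.
  intros Hjl Hz. destruct (iter_maps_pair (n - 1) _ _ (F z) (paired_next j l Hjl) Hz) as [_ H].
  destruct Hjl as (Hj & Hl & _). rewrite <- !(Nat.iter_succ_r (n - 1) nat) in H.
  replace (S (n - 1)) with n in H by lia. rewrite !iter_cyc_succ_period in H by auto.
  unfold iterF in *. rewrite <- Nat.iter_succ_r in H. now replace (S (n - 1)) with n in H by lia.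
Qed.

Lemma iterF_mul m x : iterF F (m * n) x = Nat.iter m (iterF F n) x.
Proof.
  induction m as [|m IH]; [reflexivity|].
  unfold iterF in *. simpl (S m * n)%nat. now rewrite Nat.iter_add, IH.
Qed.

Lemma Fn_cvg_pair j l q z : paired j l -> P j <= q <= Q l -> iterF F n q = q ->
  P j <= iterF F n z <= Q l -> is_lim_seq (fun m => iterF F (m * n) z) q.
Proof.
  intros Hjl Hq Hfix Hz. apply is_lim_seq_incr_1.
  apply is_lim_seq_ext with (fun m => Nat.iter m (iterF F n) (iterF F n z)).
  { intros m. rewrite iterF_mul. symmetry. apply Nat.iter_succ_r. }
  apply is_lim_seq_Reals, (iter_cvg_fixpoint (iterF F n) (P j) (Q l)); auto.
  - apply continuity_iterF.
  - intros x y Hx Hy. apply (iterF_le_pair n j l); auto; lra.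
  - intros x y Hx Hxy Hy. now apply (Fn_displacement_decr j l).
Qed.

Lemma pair_fixpoint_exists : exists l0 p, paired n l0 /\ P n <= p <= Q l0 /\ iterF F n p = p.
Proof.
  destruct (lcell_one k n Hk Hkn Hcop) as [l0 [Hl0 E]].
  assert (Hpair : paired n l0) by (split; [lia | split; [lia | now rewrite E, (rcell_n k n)]]).
  pose proof (P_lt_Q n l0 Hpair).
  pose proof (Fn_maps_pair n l0 (P n) Hpair ltac:(lra)).
  pose proof (Fn_maps_pair n l0 (Q l0) Hpair ltac:(lra)).
  destruct (IVT_cor (fun x => iterF F n x - x) (P n) (Q l0)) as [p [Hp Hp0]].
  - intros x. apply continuity_pt_minus; [apply continuity_iterF | apply continuity_pt_id].
  - lra.
  - nra.
  - cbv beta in Hp0. exists l0, p. split; [exact Hpair | split; [exact Hp | lra]].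
Qed.

Section PeriodicOrbit.
Variables (l0 : nat) (p : R).
Hypotheses (Hpair : paired n l0) (Hp : P n <= p <= Q l0) (Hfix : iterF F n p = p).

Lemma orbit_in_pairs i :
  paired (Nat.iter i (cyc_succ n) n) (Nat.iter i (cyc_succ n) l0) /\
  P (Nat.iter i (cyc_succ n) n) <= iterF F i p <= Q (Nat.iter i (cyc_succ n) l0).
Proof. exact (iter_maps_pair i n l0 p Hpair Hp). Qed.

Lemma orbit_outer i : iterF F i p < ym \/ yp < iterF F i p.
Proof. destruct (orbit_in_pairs i) as [H1 H2]. eapply pair_outer; eauto. Qed.

Lemma orbit_fixed i : iterF F n (iterF F i p) = iterF F i p.
Proof. unfold iterF in *. now rewrite <- !Nat.iter_add, Nat.add_comm, Nat.iter_add, Hfix. Qed.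

(* [p] lies in the cell of [0], while for [0 < j < n] the point [F^j p] lies in
   the cell [rcell j], which is not [0]. *)
Lemma orbit_period : periodic_of_period F n p.
Proof.
  split; [lia | split; [exact Hfix |]]. intros j Hj E.
  destruct (orbit_in_pairs j) as [H1 H2]. rewrite iter_cyc_succ_from_n in H1, H2 by lia.
  pose proof (pair_in_cell _ _ _ H1 H2) as Cj. pose proof (pair_in_cell _ _ _ Hpair Hp) as C0.
  rewrite (rcell_n k n), E in * by auto. simpl in C0. pose proof cell_width_pos.
  assert (rcell K N j <> 0%Z) by (apply (rcell_neq0 k n); auto; lia).
  destruct (Z.le_gt_cases 1 (rcell K N j)) as [h | h].
  - assert (1 <= IZR (rcell K N j)) by (apply IZR_le; lia). nra.
  - assert (IZR (rcell K N j) <= -1) by (apply IZR_le; lia). nra.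
Qed.

Lemma orbit_attracting : attracting F n p.
Proof.
  split; [apply ex_derive_iterF|].
  pose proof (Fn_slope_pair n l0 p Hpair Hp). rewrite Rabs_pos_eq; lra.
Qed.

Lemma ym_immediate_basin : immediate_basin F n p ym.
Proof.
  set (i := (n - l0)%nat). destruct Hpair as (_ & Hl0 & _).
  destruct (orbit_in_pairs i) as [Hjn Hq].
  rewrite (iter_cyc_succ_add n i l0) in Hjn, Hq by lia. replace (l0 + i)%nat with n in * by lia.
  set (j := Nat.iter i (cyc_succ n) n) in *. pose proof ym_orbit_return.
  exists i. split; [lia|]. intros z Hz. exists i. split; [lia|].
  set (q := iterF F i p) in *. rewrite Rmin_right, Rmax_left in Hz by lra.
  apply (Fn_cvg_pair j n); [exact Hjn | exact Hq | apply orbit_fixed |].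
  apply Fn_back_to_pair; auto. rewrite cyc_succ_n.
  destruct (F_maps_pair j n q Hjn Hq) as [Hlo _]. split.
  - apply Rle_trans with (F q); auto. apply F_le_outer; lra.
  - apply F_le_outer; lra.
Qed.

Lemma yp_immediate_basin : immediate_basin F n p yp.
Proof.
  pose proof yp_orbit_return.
  exists 0%nat. split; [lia|]. intros z Hz. simpl in Hz. rewrite Rmin_left, Rmax_right in Hz by lra.
  exists 0%nat. split; [lia|]. apply (Fn_cvg_pair n l0); auto.
  apply Fn_back_to_pair; auto. rewrite cyc_succ_n.
  destruct (F_maps_pair n l0 p Hpair Hp) as [_ Hhi]. split.
  - apply F_le_outer; lra.
  - apply Rle_trans with (F p); auto. apply F_le_outer; lra.
Qed.

End PeriodicOrbit.

End Dynamics.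

Theorem lemma3p1 (k n : nat) (g : R -> R) (ym yp eps : R) :
  (0 < k)%nat -> (k < n)%nat -> Nat.gcd k n = 1%nat ->
  in_class_F n (INR k / INR n) g ym yp eps ->
  exists p : R,
    periodic_of_period (Fmap (INR k / INR n) g) n p /\
    attracting (Fmap (INR k / INR n) g) n p /\
    (forall j : nat, (j < n)%nat ->
       iterF (Fmap (INR k / INR n) g) j p < ym \/
       yp < iterF (Fmap (INR k / INR n) g) j p) /\
    immediate_basin (Fmap (INR k / INR n) g) n p ym /\
    immediate_basin (Fmap (INR k / INR n) g) n p yp.
Proof.
  intros Hk Hkn Hcop HC.
  destruct (pair_fixpoint_exists k n g ym yp eps Hk Hkn Hcop HC) as (l0 & p & Hpair & Hp & Hfix).
  exists p. split; [|split; [|split; [|split]]]; intros;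
    eauto using orbit_period, orbit_attracting, orbit_outer, ym_immediate_basin, yp_immediate_basin.
Qed.
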